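(* Let $(\mathcal X,R)$ be a quantum poset such that $\mathcal X$ has only finitely many atoms. Then $(\mathcal X,R)$ is a quantum cpo.
   Context: A quantum set $\mathcal X$ is a set $\mathrm{At}(\mathcal X)$ of nonzero finite-dimensional Hilbert spaces (atoms). A relation $R$ from $\mathcal X$ to $\mathcal Y$ is a choice of subspaces $R(X,Y)\subseteq L(X,Y)$ for all atoms. Composition: $(S\circ R)(X,Z)=\mathrm{span}\{sr: r\in R(X,Y), s\in S(Y,Z), Y\in\mathrm{At}(\mathcal Y)\}$; identity $I_{\mathcal X}(X,X)=\mathbb C 1_X$ and $0$ off the diagonal; adjoint $R^\dagger(Y,X)=\{r^\dagger: r\in R(X,Y)\}$; $R\le S$ entrywise inclusion; $\bigwedge$ entrywise intersection. A function $F:\mathcal X\to\mathcal Y$ is a relation with $F\circ F^\dagger\le I_{\mathcal Y}$ and $F^\dagger\circ F\ge I_{\mathcal X}$. A quantum poset is $(\mathcal X,R)$ with $I_{\mathcal X}\le R$, $R\circ R\le R$, $R\wedge R^\dagger\le I_{\mathcal X}$. For functions $F,G:\mathcal W\to\mathcal X$, $F\sqsubseteq G$ means $G\le R\circ F$. For an increasing sequence $K_1\sqsubseteq K_2\sqsubseteq\cdots:\mathcal W\to\mathcal X$, write $K_n\nearrow K_\infty$ if $K_\infty:\mathcal W\to\mathcal X$ is a function with $R\circ K_\infty=\bigwedge_{n}R\circ K_n$. $\mathbf H_d$ denotes the quantum set whose single atom is $\mathbb C^d$. A quantum poset $(\mathcal X,R)$ is a quantum cpo if for every $d\ge 1$ and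 every increasing sequence $K_1\sqsubseteq K_2\sqsubseteq\cdots:\mathbf H_d\to\mathcal X$ there is a function $K_\infty:\mathbf H_d\to\mathcal X$ with $K_n\nearrow K_\infty$. *)

From HB Require Import structures.
From mathcomp Require Import all_boot all_order all_algebra.
From mathcomp Require Import complex.
From mathcomp Require Import reals.
Set Implicit Arguments. Unset Strict Implicit. Unset Printing Implicit Defensive.
Import Order.TTheory GRing.Theory Num.Theory.
Local Open Scope ring_scope.

(* A quantum set with finitely many atoms: the atoms are indexed by a finite
   type; the atom with index i is the Hilbert space C^(qdim i) (standard inner
   product), which is nonzero. *)
Record qset := QSet {
  qidx :> finType;
  qdim : qidx -> nat;
  qdim_gt0 : forall i, (0 < qdim i)%N }.

Definition qH (d : nat) (hd : (0 < d)%N) : qset :=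
  @QSet unit (fun _ => d) (fun _ => hd).

Section QRel.
Variable C : numClosedFieldType.

(* A relation X -> Y: for every pair of atoms (x, y) a subspace of
   L(C^(qdim x), C^(qdim y)) = 'M_(qdim y, qdim x), encoded (as in mxalgebra)
   by a square matrix whose row space is spanned by the mxvec-encodings of
   the members of the subspace. *)
Definition qrel (X Y : qset) :=
  forall (x : X) (y : Y), 'M[C]_(qdim y * qdim x).

Definition qmem (m n : nat) (A : 'M[C]_(m, n)) (S : 'M[C]_(m * n)) : Prop :=
  (mxvec A <= S)%MS.

Definition hadj (m n : nat) (A : 'M[C]_(m, n)) : 'M[C]_(n, m) :=
  (map_mx Num.conj A)^T.

(* composition: (S o R)(x, z) = span { s r | r in R(x,y), s in S(y,z), y } *)
Definition qcomp (X Y Z : qset) (S : qrel Y Z) (R : qrel X Y) : qrel X Z :=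
  fun x z =>
    (\sum_(y : Y) \sum_(a < qdim y * qdim x) \sum_(b < qdim z * qdim y)
       << mxvec (vec_mx (row b (S y z)) *m vec_mx (row a (R x y))) >>)%MS.

Definition qid (X : qset) : qrel X X :=
  fun x x' => if x == x' then
                << mxvec (pid_mx (qdim x) : 'M[C]_(qdim x', qdim x)) >>%MS
              else 0.

(* adjoint relation: R^dag(y, x) = { r^dag | r in R(x, y) } *)
Definition qadj (X Y : qset) (R : qrel X Y) : qrel Y X :=
  fun y x => << \matrix_(k < qdim y * qdim x)
                   mxvec (hadj (vec_mx (row k (R x y)))) >>%MS.

Definition qle (X Y : qset) (R S : qrel X Y) : Prop :=
  forall x y, (R x y <= S x y)%MS.

Definition qmeet (X Y : qset) (R S : qrel X Y) : qrel X Y :=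
  fun x y => (R x y :&: S x y)%MS.

Definition qfun (X Y : qset) (F : qrel X Y) : Prop :=
  qle (qcomp F (qadj F)) (@qid Y) /\ qle (@qid X) (qcomp (qadj F) F).

Definition qposet (X : qset) (R : qrel X X) : Prop :=
  [/\ qle (@qid X) R, qle (qcomp R R) R & qle (qmeet R (qadj R)) (@qid X)].

Definition qsqle (W X : qset) (R : qrel X X) (F G : qrel W X) : Prop :=
  qle G (qcomp R F).

Definition qbigmeet_eq (X Y : qset) (S : qrel X Y) (T : nat -> qrel X Y) : Prop :=
  forall x y (A : 'M[C]_(qdim y, qdim x)),
    qmem A (S x y) <-> (forall n, qmem A (T n x y)).

Definition qsup_lim (W X : qset) (R : qrel X X) (K : nat -> qrel W X)
  (Kinf : qrel W X) : Prop :=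
  qfun Kinf /\ qbigmeet_eq (qcomp R Kinf) (fun n => qcomp R (K n)).

Definition qcpo (X : qset) (R : qrel X X) : Prop :=
  forall (d : nat) (hd : (0 < d)%N) (K : nat -> qrel (qH hd) X),
    (forall n, qfun (K n)) ->
    (forall n, qsqle R (K n) (K n.+1)) ->
    exists Kinf : qrel (qH hd) X, qsup_lim R K Kinf.

End QRel.

From HB Require Import structures.
From mathcomp Require Import all_boot all_order all_algebra.
From mathcomp Require Import complex reals.
From Stdlib Require Import Classical.

(* Let K_1 ⊑ K_2 ⊑ ... : H_d -> X be increasing and put P_n := R o K_n.
   Transitivity of R makes the sequence of relations P_n decreasing:
   P_(n+1) <= R o (R o K_n) <= (R o R) o K_n <= R o K_n.  Each P_n is a
   family of subspaces indexed by the finitely many pairs of atoms, so the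
   sum of their dimensions is a nonincreasing sequence of naturals; it is
   eventually constant, and then the subspaces themselves are eventually
   constant.  If P_n is constant from N on, then P_N is the intersection of
   all the P_n, i.e. K_n ↗ K_N. *)

Set Implicit Arguments. Unset Strict Implicit. Unset Printing Implicit Defensive.
Import Order.TTheory GRing.Theory Num.Theory.
Local Open Scope ring_scope.

Section Composition.
Variable C : numClosedFieldType.

Lemma qle_refl (X Y : qset) (A : qrel C X Y) : qle A A.
Proof. by move=> x y. Qed.

Lemma qle_trans (X Y : qset) (A B D : qrel C X Y) :
  qle A B -> qle B D -> qle A D.
Proof. by move=> AB BD x y; apply: submx_trans (AB x y) (BD x y). Qed.

Lemma vec_row_mem m n (A : 'M[C]_(m * n)) k : qmem (vec_mx (row k A)) A.
Proof. by rewrite /qmem vec_mxK row_sub. Qed.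

Lemma mulmx_sub_rows (m n p : nat) (v : 'rV[C]_m) (S : 'M[C]_(n, m))
    (M : 'M[C]_(m, p)) (T : 'M[C]_p) :
  (v <= S)%MS -> (forall k, row k S *m M <= T)%MS -> (v *m M <= T)%MS.
Proof.
move=> vS rowsS; apply: submx_trans (submxMr M vS) _.
by apply/row_subP => k; rewrite row_mul.
Qed.

Lemma mulmx_sub_sums (I : finType) (P : pred I) n p (A_ : I -> 'M[C]_n)
    (M : 'M[C]_(n, p)) (T : 'M[C]_p) :
  (forall i, P i -> A_ i *m M <= T)%MS -> ((\sum_(i | P i) A_ i)%MS *m M <= T)%MS.
Proof.
move=> sumsT; elim/big_rec: _ => [|i S Pi IH]; first by rewrite mul0mx sub0mx.
by rewrite addsmxMr addsmx_sub sumsT.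
Qed.

Lemma qcomp_mul_sub (X Y Z : qset) (S : qrel C Y Z) (R : qrel C X Y) x z p
    (M : 'M[C]_(qdim z * qdim x, p)) (T : 'M[C]_p) :
  (forall y (a : 'I_(qdim y * qdim x)) (b : 'I_(qdim z * qdim y)),
     mxvec (vec_mx (row b (S y z)) *m vec_mx (row a (R x y))) *m M <= T)%MS ->
  (qcomp S R x z *m M <= T)%MS.
Proof.
move=> gensT; apply: mulmx_sub_sums => y _; apply: mulmx_sub_sums => a _.
by apply: mulmx_sub_sums => b _; rewrite (eqmxMr _ (genmxE _)).
Qed.

Lemma qcomp_sub (X Y Z : qset) (S : qrel C Y Z) (R : qrel C X Y) x z
    (T : 'M[C]_(qdim z * qdim x)) :
  (forall y (a : 'I_(qdim y * qdim x)) (b : 'I_(qdim z * qdim y)),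
     qmem (vec_mx (row b (S y z)) *m vec_mx (row a (R x y))) T) ->
  (qcomp S R x z <= T)%MS.
Proof.
move=> gensT; rewrite -[qcomp S R x z]mulmx1.
by apply: qcomp_mul_sub => y a b; rewrite mulmx1; apply: gensT.
Qed.

Lemma qcomp_mem (X Y Z : qset) (S : qrel C Y Z) (R : qrel C X Y) x y z
    (s : 'M[C]_(qdim z, qdim y)) (r : 'M[C]_(qdim y, qdim x)) :
  qmem s (S y z) -> qmem r (R x y) -> qmem (s *m r) (qcomp S R x z).
Proof.
rewrite /qmem => sS rR.
rewrite -[s *m r]/(mulmxr r s) -mul_vec_lin.
apply: (mulmx_sub_rows sS) => b; rewrite -{1}[row b _]vec_mxK mul_vec_lin /=.
set s' := vec_mx (row b (S y z)).
rewrite -[s' *m r]/(mulmx s' r) -mul_vec_lin.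
apply: (mulmx_sub_rows rR) => a; rewrite -{1}[row a _]vec_mxK mul_vec_lin /=.
apply: (sumsmx_sup y) => //; apply: (sumsmx_sup a) => //.
by apply: (sumsmx_sup b) => //; rewrite genmxE.
Qed.

Lemma qcomp_monor (X Y Z : qset) (S : qrel C Y Z) (R R' : qrel C X Y) :
  qle R R' -> qle (qcomp S R) (qcomp S R').
Proof.
move=> RR' x z; apply: qcomp_sub => y a b; apply: qcomp_mem.
  exact: vec_row_mem.
exact: submx_trans (vec_row_mem _ _) (RR' _ _).
Qed.

Lemma qcomp_monol (X Y Z : qset) (S S' : qrel C Y Z) (R : qrel C X Y) :
  qle S S' -> qle (qcomp S R) (qcomp S' R).
Proof.
move=> SS' x z; apply: qcomp_sub => y a b; apply: qcomp_mem.
  exact: submx_trans (vec_row_mem _ _) (SS' _ _).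
exact: vec_row_mem.
Qed.

Lemma qcomp_assoc_sub (W X Y Z : qset) (T : qrel C Y Z) (S : qrel C X Y)
    (R : qrel C W X) :
  qle (qcomp T (qcomp S R)) (qcomp (qcomp T S) R).
Proof.
move=> w z; apply: qcomp_sub => y a b.
set t := vec_mx (row b (T y z)).
rewrite /qmem -[t *m _]/(mulmx t (vec_mx (row a (qcomp S R w y)))).
rewrite -mul_vec_lin vec_mxK; apply: submx_trans (submxMr _ (row_sub _ _)) _.
apply: qcomp_mul_sub => x a' b'; rewrite mul_vec_lin /= mulmxA.
by apply: qcomp_mem; [apply: qcomp_mem|]; apply: vec_row_mem.
Qed.

Lemma qsqle_comp_decr (W X : qset) (R : qrel C X X) (F G : qrel C W X) :
  qle (qcomp R R) R -> qsqle R F G -> qle (qcomp R G) (qcomp R F).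
Proof.
move=> Rtrans FG; apply: qle_trans (qcomp_monor R FG) _.
exact: qle_trans (qcomp_assoc_sub R R F) (qcomp_monol F Rtrans).
Qed.

End Composition.

Lemma nonincn_stable (f : nat -> nat) :
  {homo f : n m / (n <= m)%N >-> (m <= n)%N} ->
  exists N, forall m, (N <= m)%N -> f m = f N.
Proof.
move=> f_dec; suff bounded: forall v n, (f n <= v)%N ->
    exists N, forall m, (N <= m)%N -> f m = f N by exact: (bounded _ 0%N (leqnn _)).
elim=> [|v IHv] n fn_le.
  by exists n => m nm; apply/eqP; rewrite eqn_leq f_dec // (leq_trans fn_le).
have [[m [nm fm_lt]] | no_drop] :=
  classic (exists m, (n <= m)%N /\ (f m < f n)%N).
  by apply: (IHv m); rewrite -ltnS (leq_trans fm_lt).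
exists n => m nm; apply/eqP; rewrite eqn_leq f_dec // leqNgt.
by apply/negP => fm_lt; apply: no_drop; exists m.
Qed.

Section Stabilization.
Variable C : numClosedFieldType.

(* A decreasing sequence of relations between quantum sets with finitely
   many atoms is eventually constant: the total dimension of the subspaces
   is a nonincreasing natural number, and equal dimensions force equality. *)
Lemma qrel_decr_stable (W X : qset) (P : nat -> qrel C W X) :
  {homo P : n m / (n <= m)%N >-> qle m n} ->
  exists N, forall m, (N <= m)%N -> qle (P N) (P m).
Proof.
move=> P_dec.
pose dim n := (\sum_(p : W * X) \rank (P n p.1 p.2))%N.
have dim_dec : {homo dim : n m / (n <= m)%N >-> (m <= n)%N}.
  by move=> n m nm; apply: leq_sum => p _; apply: mxrankS (P_dec _ _ nm _ _).
have [N dim_const] := nonincn_stable dim_dec.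
exists N => m Nm.
have := @leqif_sum _ xpredT (fun p => (P N p.1 p.2 <= P m p.1 p.2)%MS)
  (fun p => \rank (P m p.1 p.2)) (fun p => \rank (P N p.1 p.2))
  (fun p _ => mxrank_leqif_sup (P_dec _ _ Nm p.1 p.2)).
case=> _; rewrite -/(dim m) -/(dim N) dim_const // eqxx => /esym /forallP sub.
by move=> w x; apply: (sub (w, x)).
Qed.

End Stabilization.

Theorem mainTheorem7 (R : realType) (X : qset) (Rel : qrel R[i] X X) :
  qposet Rel -> qcpo Rel.
Proof.
move=> [_ Rel_trans _] d hd K K_fun K_incr.
pose P n := qcomp Rel (K n).
have P_dec : {homo P : n m / (n <= m)%N >-> qle m n}.
  apply: (homo_leq (r := fun A B => qle B A)) => [A|B A D|n].
  - exact: qle_refl.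
  - by move=> AB BD; apply: qle_trans BD AB.
  - exact: qsqle_comp_decr Rel_trans (K_incr n).
have [N P_const] := qrel_decr_stable P_dec.
exists (K N); split=> [|x y A]; first exact: K_fun.
split=> [A_PN n | A_Pn]; last exact: A_Pn N.
have [nN | Nn] := leqP n N.
  exact: submx_trans A_PN (P_dec _ _ nN x y).
exact: submx_trans A_PN (P_const _ (ltnW Nn) x y).
Qed.
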